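(* Let $(X,E,\ell)$ be a weighted tree with similarity matrix $Z=(e^{-d(x,y)})_{x,y\in X}$. Then $Z$ is invertible and for $x,y\in X$ with $x\neq y$: $$Z^{-1}(x,x)=1+\sum_{e\ni x}\frac{e^{-2\ell(e)}}{1-e^{-2\ell(e)}},$$ $Z^{-1}(x,y)=0$ if $x$ and $y$ are not adjacent, and if $e=\{x,y\}\in E$, $$Z^{-1}(x,y)=-\frac{e^{-\ell(e)}}{1-e^{-2\ell(e)}}.$$
   Context: A weighted tree is a triple $(X,E,\ell)$ where $(X,E)$ is a finite simple undirected graph that is a tree, and $\ell\colon E\to(0,\infty)$ assigns lengths to edges. Its vertex set $X$ is a metric space with $d(x,y)$ the total length of the unique simple path from $x$ to $y$. The sum $\sum_{e\ni x}$ is over edges containing $x$. *)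

From HB Require Import structures.
From mathcomp Require Import all_boot all_order all_algebra.
From mathcomp Require Import reals.
From mathcomp Require Import sequences.
From mathcomp.analysis Require Import exp.
Set Implicit Arguments. Unset Strict Implicit. Unset Printing Implicit Defensive.
Import Order.TTheory GRing.Theory Num.Theory.
Local Open Scope ring_scope.

Definition simple_graph (T : finType) (adj : rel T) : Prop :=
  symmetric adj /\ irreflexive adj.

Definition upath (T : finType) (adj : rel T) (x : T) (p : seq T) (y : T) : bool :=
  [&& path adj x p, uniq (x :: p) & last x p == y].

(* A cycle: at least 3 distinct vertices x :: p, consecutive ones adjacent,
   and the last adjacent to x. *)
Definition has_cycle (T : finType) (adj : rel T) : Prop :=
  exists (x : T) (p : seq T),
    [&& (2 <= size p)%N, path adj x p, uniq (x :: p) & adj (last x p) x].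

Definition connected_graph (T : finType) (adj : rel T) : Prop :=
  forall x y : T, exists p, upath adj x p y.

Definition is_tree (T : finType) (adj : rel T) : Prop :=
  [/\ simple_graph adj, connected_graph adj & ~ has_cycle adj].

Fixpoint path_len (T : Type) (R : nmodType) (len : T -> T -> R) (x : T)
    (p : seq T) : R :=
  match p with
  | [::] => 0
  | y :: p' => len x y + path_len len y p'
  end.

From HB Require Import structures.
From mathcomp Require Import all_boot all_order all_algebra.
From mathcomp Require Import reals.
From mathcomp Require Import sequences.
From mathcomp.analysis Require Import exp.
From mathcomp Require Import ring lra.
Set Implicit Arguments.
Unset Strict Implicit.
Unset Printing Implicit Defensive.
Import Order.TTheory GRing.Theory Num.Theory.
Local Open Scope ring_scope.

(* Write q_e = exp(-l(e)) and let M be the claimed inverse.  In a tree, seen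
   from a vertex x, every vertex z other than x has exactly one neighbour w
   (its parent) closer to x, with d(x,z) = d(x,w) + l(w,z); every other
   neighbour y of z satisfies d(x,y) = d(x,z) + l(z,y).  Hence in the entry
   (Z M)(x,z) each child y contributes e^{-d(x,z)} (q^2 - q q)/(1 - q^2) = 0,
   while the diagonal term and the parent contribute
   e^{-d(x,z)} + e^{-d(x,w)} (q^3 - q)/(1 - q^2) = 0 (or 1 when z = x, which
   has no parent).  So Z M = 1. *)

Lemma path_len_rcons (T : Type) (R : nmodType) (len : T -> T -> R) x p y :
  path_len len x (rcons p y) = path_len len x p + len (last x p) y.
Proof.
by elim: p x => [|a p IHp] x /=; rewrite ?addr0 ?add0r // IHp addrA.
Qed.

Section SimplePaths.

Variables (T : finType) (adj : rel T).

Lemma upath_rcons x p z y :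
  upath adj x p z -> adj z y -> y \notin x :: p -> upath adj x (rcons p y) y.
Proof.
case/and3P=> pxp uxp /eqP lxp zy yNp.
rewrite /upath rcons_path pxp lxp zy last_rcons eqxx andbT.
by rewrite -rcons_cons rcons_uniq yNp uxp.
Qed.

Lemma upath_belast x p y :
  upath adj x (rcons p y) y -> upath adj x p (last x p).
Proof.
case/and3P=> + + _; rewrite rcons_path -rcons_cons rcons_uniq.
by case/andP=> pxp _ /andP[_ uxp]; rewrite /upath pxp uxp eqxx.
Qed.

(* Otherwise the part of the path from y to z, closed by the edge zy, would
   be a cycle. *)
Lemma acyclic_upath_notin x p z y :
  ~ has_cycle adj -> upath adj x (rcons p z) z -> adj z y ->
  y != last x p -> y \notin x :: p.
Proof.
move=> acyc /and3P[+ up _] zy yNw; rewrite rcons_path => /andP[pxp wz].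
apply/negP=> yp; move: pxp up wz yNw; case/splitPl: yp => q1 q2 lq1.
rewrite cat_path last_cat lq1 => /andP[_ pyq2] up wz yNw.
apply: acyc; exists y, (rcons q2 z).
rewrite size_rcons rcons_path pyq2 wz last_rcons zy /= andbT.
move: up; rewrite rcons_cat -cat_cons cat_uniq => /and3P[_ disj ->].
rewrite andbT; apply/andP; split.
  by case: q2 pyq2 wz yNw {disj} => [|a q2] //= _ _; rewrite eqxx.
apply: contraL disj => yq2; apply/negPn/hasP.
by exists y; rewrite //= -lq1 mem_last.
Qed.

End SimplePaths.

Section TreeDistance.

Variables (R : realType) (T : finType) (adj : rel T).
Variables (len : T -> T -> R) (d : T -> T -> R).
Hypothesis d_upath :
  forall {x y p}, upath adj x p y -> d x y = path_len len x p.

Lemma dist_upath_rcons x p y :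
  upath adj x (rcons p y) y -> d x y = d x (last x p) + len (last x p) y.
Proof.
move=> xpy; rewrite (d_upath xpy) path_len_rcons.
by rewrite (d_upath (upath_belast xpy)).
Qed.

Lemma dist_refl x : d x x = 0.
Proof. by rewrite (d_upath (p := [::])) //= /upath /= eqxx. Qed.

Lemma dist_adj x y : irreflexive adj -> adj x y -> d x y = len x y.
Proof.
move=> adjI xy; have xNy : x != y by apply: contraTneq xy => ->; rewrite adjI.
rewrite (dist_upath_rcons (p := [::])) /= ?dist_refl ?add0r //.
by rewrite /upath /= xy !inE xNy eqxx.
Qed.

Lemma tree_dist_parent x z : is_tree adj -> x != z ->
  exists2 w, adj z w &
    d x z = d x w + len w z /\
    forall y, adj z y -> y != w -> d x y = d x z + len z y.
Proof.
move=> [[adjS adjI] conn acyc] xNz.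
have [p xpz] := conn x z; case/lastP: p xpz => [|p w'] xpz.
  by move: xpz xNz => /and3P[_ _ /= /eqP->]; rewrite eqxx.
have w'z : w' = z by case/and3P: xpz => _ _; rewrite last_rcons => /eqP.
subst w'.
exists (last x p).
  by case/and3P: xpz => + _ _; rewrite rcons_path adjS => /andP[].
split=> [|y zy yNw]; first exact: dist_upath_rcons.
have yNz : y != z by apply: contraTneq zy => ->; rewrite adjI.
have yNp : y \notin x :: rcons p z.
  rewrite -rcons_cons mem_rcons inE negb_or yNz.
  exact: acyclic_upath_notin acyc xpz zy yNw.
by rewrite (dist_upath_rcons (upath_rcons xpz zy yNp)) last_rcons.
Qed.

End TreeDistance.

Section TreeSimilarityInverse.

Variable R : realType.

Definition diag_weight (l : R) := expR (-2 * l) / (1 - expR (-2 * l)).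

Definition edge_weight (l : R) := expR (- l) / (1 - expR (-2 * l)).

Lemma expR_m2 (l : R) : expR (-2 * l) = expR (- l) ^+ 2.
Proof. by rewrite expr2 -expRD; congr expR; lra. Qed.

Lemma diag_weightE l : diag_weight l = expR (- l) * edge_weight l.
Proof. by rewrite /diag_weight /edge_weight expR_m2 mulrA. Qed.

Lemma expRN_diag_weightB l :
  0 < l -> expR (- l) * diag_weight l - edge_weight l = - expR (- l).
Proof.
move=> l_gt0; rewrite /diag_weight /edge_weight expR_m2.
have q_lt1 : expR (- l) < 1 by rewrite expR_lt1 oppr_lt0.
have q_gt0 := expR_gt0 (- l).
have : 1 - expR (- l) ^+ 2 != 0 by rewrite subr_eq0 eq_sym; apply/eqP; nra.
by move: (expR (- l)) => q q2N1; field.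
Qed.

Variables (n : nat) (adj : rel 'I_n) (len : 'I_n -> 'I_n -> R).

Definition sim_mx (d : 'I_n -> 'I_n -> R) : 'M[R]_n :=
  \matrix_(i, j) expR (- d i j).

Definition tree_inv_mx : 'M[R]_n :=
  \matrix_(i, j) if i == j then 1 + \sum_(y | adj i y) diag_weight (len i y)
                 else if adj i j then - edge_weight (len i j) else 0.

Hypotheses (adjS : symmetric adj) (adjI : irreflexive adj).
Hypothesis lenS : forall x y, len x y = len y x.

Lemma mulmx_tree_inv (A : 'M[R]_n) x z :
  (A *m tree_inv_mx) x z =
  A x z + \sum_(y | adj z y)
            (A x z * diag_weight (len z y) - A x y * edge_weight (len z y)).
Proof.
rewrite !mxE (bigD1 z) //= !mxE eqxx mulrDr mulr1 big_distrr /= -addrA.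
rewrite big_split /=; congr (_ + (_ + _)).
rewrite big_mkcond [RHS]big_mkcond; apply: eq_bigr => y _.
case: eqVneq => [->|yNz] /=; first by rewrite adjI.
rewrite !mxE (negbTE yNz) adjS lenS.
by case: (adj z y); rewrite ?mulrN ?mulr0 ?oppr0.
Qed.

Variable d : 'I_n -> 'I_n -> R.
Hypothesis len_gt0 : forall x y, adj x y -> 0 < len x y.
Hypothesis d_upath : forall x y p, upath adj x p y -> d x y = path_len len x p.

Lemma mul_sim_tree_inv_diag x : (sim_mx d *m tree_inv_mx) x x = 1.
Proof.
rewrite mulmx_tree_inv big1 ?addr0 => [|y xy]; rewrite !mxE (dist_refl d_upath).
  by rewrite oppr0 expR0.
by rewrite (dist_adj d_upath) // diag_weightE oppr0 expR0 mul1r subrr.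
Qed.

Lemma mul_sim_tree_inv_offdiag x z :
  is_tree adj -> x != z -> (sim_mx d *m tree_inv_mx) x z = 0.
Proof.
move=> tree xNz; rewrite mulmx_tree_inv.
have [w zw [dz dy]] := tree_dist_parent d_upath tree xNz.
rewrite (bigD1 w) // big1 /= => [|y /andP[zy yNw]].
  rewrite !mxE addr0 dz -lenS opprD expRD -mulrA.
  by rewrite -mulrBr expRN_diag_weightB ?len_gt0 // mulrN mulrC addrN.
by rewrite !mxE (dy y zy yNw) opprD expRD diag_weightE mulrA subrr.
Qed.

Lemma mul_sim_tree_inv : is_tree adj -> sim_mx d *m tree_inv_mx = 1%:M.
Proof.
move=> tree; apply/matrixP=> x z; rewrite [RHS]mxE.
case: eqVneq => [<-|xNz]; first exact: mul_sim_tree_inv_diag.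
exact: mul_sim_tree_inv_offdiag.
Qed.

End TreeSimilarityInverse.

Theorem proposition4p1 (R : realType) (n : nat) (adj : rel 'I_n)
    (len : 'I_n -> 'I_n -> R) (d : 'I_n -> 'I_n -> R) :
  is_tree adj ->
  (forall x y, len x y = len y x) ->
  (forall x y, adj x y -> 0 < len x y) ->
  (forall x y p, upath adj x p y -> d x y = path_len len x p) ->
  let Z := \matrix_(i, j) expR (- d i j) in
  Z \in unitmx /\
  (forall x, invmx Z x x =
     1 + \sum_(y | adj x y)
           expR (-2 * len x y) / (1 - expR (-2 * len x y))) /\
  (forall x y, x != y -> ~~ adj x y -> invmx Z x y = 0) /\
  (forall x y, adj x y ->
     invmx Z x y = - (expR (- len x y) / (1 - expR (-2 * len x y)))).
Proof.
move=> tree lenS len_gt0 d_upath Z.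
have [[adjS adjI] _ _] := tree.
have ZM : Z *m tree_inv_mx adj len = 1%:M by exact: mul_sim_tree_inv.
have [Zu _] := mulmx1_unit ZM.
have -> : invmx Z = tree_inv_mx adj len by rewrite -[RHS](mulKmx Zu) ZM mulmx1.
split=> //; split=> [x|]; first by rewrite mxE eqxx.
split=> [x y xNy xNadjy|x y xy].
  by rewrite mxE (negbTE xNy) (negbTE xNadjy).
have xNy : x != y by apply: contraTneq xy => ->; rewrite adjI.
by rewrite mxE (negbTE xNy) xy.
Qed.
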